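(* Let $v\ge2$ and $k\in\{5,6\}$. Then an optimum $(d,3)$-CDA$((d+1)v^3;k,v)$ exists for every positive integer $d$ with $d+1\le v$.
   Context: Consecutive $t$-way interaction in an $N\times k$ array $A=(a_{ij})$ over a $v$-set $V$: $T=\{(i,x_i),\dots,(i+t-1,x_{i+t-1})\}$, $1\le i\le k-t+1$, $x_r\in V$; $\rho(A,T)=\{r: a_{r,j}=x_j\ \forall (j,x_j)\in T\}$, $\rho(A,\mathcal T)=\bigcup_{T\in\mathcal T}\rho(A,T)$. A $(d,t)$-CDA$(N;k,v)$ is an $N\times k$ array over $V$ in which every $t$ consecutive columns contain every $t$-tuple at least once, and such that for every set $\mathcal T$ of exactly $d$ distinct consecutive $t$-way interactions and every consecutive $t$-way interaction $T$: $\rho(A,T)\subseteq\rho(A,\mathcal T)$ iff $T\in\mathcal T$. It is optimum if $N=(d+1)v^t$. *)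

From mathcomp Require Import all_boot all_order all_algebra.
Set Implicit Arguments. Unset Strict Implicit. Unset Printing Implicit Defensive.

Definition array (N k v : nat) := 'M['I_v]_(N, k).

(* A consecutive t-way interaction in an array with k columns:
   a starting column i (0-based, i + t <= k, i.e. i < k - t + 1)
   together with the values x_0, ..., x_(t-1) placed in columns i, ..., i+t-1. *)
Definition interaction (k t v : nat) :=
  ('I_(k.+1 - t) * {ffun 'I_t -> 'I_v})%type.

Definition rho (N k t v : nat) (A : array N k v) (T : interaction k t v)
  : {set 'I_N} :=
  [set r : 'I_N | [forall j : 'I_t, forall c : 'I_k,
      (val c == val T.1 + val j) ==> (A r c == T.2 j)]].

Definition rhoset (N k t v : nat) (A : array N k v)
  (TT : {set interaction k t v}) : {set 'I_N} :=
  \bigcup_(T in TT) rho A T.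

Definition is_CDA (d t N k v : nat) (A : array N k v) : Prop :=
  (forall T : interaction k t v, rho A T != set0) /\
  (forall (TT : {set interaction k t v}) (T : interaction k t v),
      #|TT| = d -> (rho A T \subset rhoset A TT) <-> T \in TT).

Definition optimum_CDA_exists (d t k v : nat) : Prop :=
  exists A : array ((d + 1) * v ^ t) k v, is_CDA d t A.

From mathcomp Require Import all_boot all_order all_algebra.
From mathcomp Require Import zify.
Set Implicit Arguments. Unset Strict Implicit. Unset Printing Implicit Defensive.
Import GRing.Theory.

(* The rows are indexed by a shift s in {0,...,d} and a base triple
   (y0,y1,y2) in (Z/v)^3; the row reads (y0, y1, y2, y0+s, y1+s, y2+s),
   truncated to k columns.  The d + 1 shifts are distinct elements of Z/v.

   1. A general criterion (any t): an array is a (d,t)-CDA as soon as every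
      interaction occurs in at least d + 1 rows and two distinct interactions
      never share two distinct rows.  Indeed, if rho(T) were covered by d
      other interactions, two of the d + 1 rows of T would be covered by the
      same one.
   2. Every window of three consecutive columns (start <= 3) of a shifted row
      can be prescribed, for each shift, by a suitable base triple; and four
      consecutive columns (start <= 2) determine both the shift and the triple.
   3. Hence in our array each interaction occurs in d + 1 rows (one per
      shift), and two interactions with different starts overlap on four
      consecutive columns, so that two rows containing both are equal. *)

Section Criterion.
Variables (d t N k v : nat) (A : array N k v).

Lemma rhoP (T : interaction k t v) r :
  reflect (forall (j : 'I_t) (c : 'I_k), val c = val T.1 + val j -> A r c = T.2 j)
          (r \in rho A T).
Proof.
rewrite inE; apply: (iffP forallP) => [H j c hc | H j].
  by move/forallP/(_ c)/implyP: (H j); rewrite hc eqxx => /(_ isT)/eqP.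
by apply/forallP => c; apply/implyP => /eqP hc; rewrite (H j c hc).
Qed.

Lemma rho_window_agree (T : interaction k t v) r1 r2 (c : 'I_k) :
  r1 \in rho A T -> r2 \in rho A T -> (T.1 : nat) <= c < (T.1 : nat) + t ->
  A r1 c = A r2 c.
Proof.
move=> /rhoP h1 /rhoP h2 /andP[lo hi].
have hj : c - (T.1 : nat) < t by lia.
by rewrite (h1 (Ordinal hj)) ?(h2 (Ordinal hj)) //= subnKC.
Qed.

Lemma rho_same_start (T1 T2 : interaction k t v) r :
  r \in rho A T1 -> r \in rho A T2 -> T1.1 = T2.1 -> T1 = T2.
Proof.
case: T1 T2 => [i x1] [i' x2] /rhoP h1 /rhoP h2 /= ei; subst i'.
congr pair; apply/ffunP => j.
have hc : i + j < k by have := ltn_ord i; have := ltn_ord j; lia.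
by rewrite -(h1 j (Ordinal hc)) // (h2 j (Ordinal hc)).
Qed.

Lemma rho_overlap_agree (T1 T2 : interaction k t v) r1 r2 (c : 'I_k) :
  r1 \in rho A T1 -> r1 \in rho A T2 -> r2 \in rho A T1 -> r2 \in rho A T2 ->
  (T1.1 : nat) < T2.1 <= (T1.1 : nat) + t ->
  (T1.1 : nat) <= c <= (T1.1 : nat) + t -> A r1 c = A r2 c.
Proof.
move=> h11 h12 h21 h22 /andP[lt12 le12] /andP[lo hi].
case: (ltnP c ((T1.1 : nat) + t)) => hc.
  by apply: (rho_window_agree h11 h21); rewrite lo.
by apply: (rho_window_agree h12 h22); apply/andP; split; lia.
Qed.

Definition separating : Prop :=
  forall (T1 T2 : interaction k t v) r1 r2,
    r1 \in rho A T1 -> r1 \in rho A T2 -> r2 \in rho A T1 -> r2 \in rho A T2 ->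
    r1 = r2 \/ T1 = T2.

Lemma CDA_of_cover_separating :
  (forall T : interaction k t v, d < #|rho A T|) -> separating -> is_CDA d t A.
Proof.
move=> cover sep; split=> [T | TT T cardTT].
  by rewrite -card_gt0; exact: leq_ltn_trans (leq0n d) (cover T).
split=> [sub | TinTT]; last by rewrite /rhoset; exact: (bigcup_sup T TinTT).
apply/negPn/negP => TnTT.
pose g r := odflt T [pick T' in TT | r \in rho A T'].
have gP r : r \in rho A T -> g r \in TT /\ r \in rho A (g r).
  move=> rT; rewrite /g; case: pickP => [T' /andP[-> ->] // | none].
  have /bigcupP[T' T'in rT'] := subsetP sub r rT.
  by have := none T'; rewrite T'in rT'.
have ginj : {in rho A T &, injective g}.
  move=> r1 r2 r1T r2T eg; have [g1 h1] := gP r1 r1T; have [_ h2] := gP r2 r2T.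
  rewrite -eg in h2; case: (sep T (g r1) r1 r2 r1T h1 r2T h2) => // eT.
  by move: TnTT; rewrite eT g1.
have : #|g @: rho A T| <= #|TT|.
  by apply/subset_leq_card/subsetP => _ /imsetP[r rT ->]; exact: (gP r rT).1.
by rewrite card_in_imset // cardTT leqNgt cover.
Qed.

End Criterion.

Arguments separating t {N k v} A.

Section ShiftedRows.
Variable V : zmodType.

Definition shifted_row (s : V) (y : V * V * V) (c : nat) : V :=
  let: (y0, y1, y2) := y in
  match c with
  | 0 => y0 | 1 => y1 | 2 => y2 | 3 => y0 + s | 4 => y1 + s | _ => y2 + s
  end%R.

(* The base triple whose shifted row reads x at columns i, i+1, i+2. *)
Definition base_for (i : nat) (s : V) (x : 'I_3 -> V) : V * V * V :=
  let x0 := x (@Ordinal 3 0 isT) in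
  let x1 := x (@Ordinal 3 1 isT) in
  let x2 := x (@Ordinal 3 2 isT) in
  match i with
  | 0 => (x0, x1, x2) | 1 => (x2 - s, x0, x1) | 2 => (x1 - s, x2 - s, x0)
  | _ => (x0 - s, x1 - s, x2 - s)
  end%R.

Lemma shifted_row_base (i : nat) (s : V) (x : 'I_3 -> V) (j : 'I_3) :
  i <= 3 -> shifted_row s (base_for i s x) (i + j) = x j.
Proof.
case: j => [[|[|[|j]]] hj] //; rewrite (bool_irrelevance hj isT);
  by case: i => [|[|[|[|i]]]] // _; rewrite /= ?subrK.
Qed.

Lemma shifted_row_inj (s1 s2 : V) (y z : V * V * V) (i : nat) : i <= 2 ->
  (forall c, i <= c <= i + 3 -> shifted_row s1 y c = shifted_row s2 z c) ->
  s1 = s2 /\ y = z.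
Proof.
case: y z => [[y0 y1] y2] [[z0 z1] z2].
case: i => [|[|[|i]]] // _ H; have /= e3 := H 3 isT.
- have /= e0 := H 0 isT; have /= e1 := H 1 isT; have /= e2 := H 2 isT.
  by rewrite e0 in e3; move/addrI: e3 => es; rewrite es e0 e1 e2.
- have /= e1 := H 1 isT; have /= e2 := H 2 isT; have /= e4 := H 4 isT.
  rewrite e1 in e4; move/addrI: e4 => es.
  by rewrite es in e3; move/addIr: e3 => e0; rewrite es e0 e1 e2.
- have /= e2 := H 2 isT; have /= e4 := H 4 isT; have /= e5 := H 5 isT.
  rewrite e2 in e5; move/addrI: e5 => es; rewrite es in e3 e4.
  by move/addIr: e3 => e0; move/addIr: e4 => e1; rewrite es e0 e1 e2.
Qed.

End ShiftedRows.

Section Construction.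
Variables (n d k : nat).
Hypotheses (d_lt_v : d < n.+1) (k_le6 : k <= 6).

Definition shift (s : 'I_d.+1) : 'I_n.+1 := widen_ord d_lt_v s.

Lemma shift_inj : injective shift.
Proof. by move=> s1 s2 [] /val_inj. Qed.

Definition row_key := ('I_d.+1 * ('I_n.+1 * 'I_n.+1 * 'I_n.+1))%type.

Lemma card_row_key : #|{: row_key}| = (d + 1) * n.+1 ^ 3.
Proof. by rewrite !card_prod !card_ord addn1 !expnS expn0 muln1 !mulnA. Qed.

Definition key_of (r : 'I_((d + 1) * n.+1 ^ 3)) : row_key :=
  enum_val (cast_ord (esym card_row_key) r).

Definition row_of (x : row_key) : 'I_((d + 1) * n.+1 ^ 3) :=
  cast_ord card_row_key (enum_rank x).

Lemma row_ofK : cancel row_of key_of.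
Proof. by move=> x; rewrite /key_of /row_of cast_ordK enum_rankK. Qed.

Lemma key_ofK : cancel key_of row_of.
Proof. by move=> r; rewrite /key_of /row_of enum_valK cast_ordKV. Qed.

Definition shift_array : array ((d + 1) * n.+1 ^ 3) k n.+1 :=
  (\matrix_(r, c) shifted_row (shift (key_of r).1) (key_of r).2 (val c))%R.

Lemma shift_arrayE r c :
  shift_array r c = shifted_row (shift (key_of r).1) (key_of r).2 (val c).
Proof. exact: mxE. Qed.

(* Each interaction occurs in the d + 1 rows obtained from its base triples. *)
Lemma shift_array_cover (T : interaction k 3 n.+1) : d < #|rho shift_array T|.
Proof.
case: T => [i x]; have hi : i <= 3 by have := ltn_ord i; lia.
pose h s := row_of (s, base_for (val i) (shift s) x).
have hinj : injective h by move=> s1 s2 /(can_inj row_ofK)/(congr1 fst).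
have : h @: setT \subset rho shift_array (i, x).
  apply/subsetP => _ /imsetP[s _ ->]; apply/rhoP => j c /= hc.
  by rewrite shift_arrayE row_ofK /= hc shifted_row_base.
by move/subset_leq_card; rewrite card_imset // cardsT card_ord.
Qed.

Lemma shift_array_rows_eq r1 r2 (i : nat) : i <= 2 -> i + 3 < k ->
  (forall c : 'I_k, i <= c <= i + 3 -> shift_array r1 c = shift_array r2 c) ->
  r1 = r2.
Proof.
move=> hi hik agree; apply: (can_inj key_ofK).
have [es ey] : shift (key_of r1).1 = shift (key_of r2).1 /\ (key_of r1).2 = (key_of r2).2.
  apply: (shifted_row_inj hi) => c hc; have hck : c < k by lia.
  by have := agree (Ordinal hck) hc; rewrite !shift_arrayE.
by case: (key_of r1) (key_of r2) es ey => [s1 y1] [s2 y2] /= /shift_inj -> ->.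
Qed.

(* Two interactions with the same start sharing a row are equal; otherwise
   they overlap (start of the later one <= 3), and rows containing both agree
   on four consecutive columns, hence coincide. *)
Lemma shift_array_separating : separating 3 shift_array.
Proof.
move=> T1 T2 r1 r2; wlog le12 : T1 T2 / (T1.1 : nat) <= (T2.1 : nat).
  move=> wlogH h11 h12 h21 h22; case: (leqP (T1.1 : nat) T2.1) => le.
    exact: wlogH.
  by case: (wlogH T2 T1 (ltnW le) h12 h11 h22 h21) => [|->]; [left | right].
move=> h11 h12 h21 h22; case: (ltngtP (T1.1 : nat) T2.1) le12 => // [lt12 _ | e _].
  left; have hi2 := ltn_ord T2.1.
  apply: (@shift_array_rows_eq _ _ T1.1); [lia | lia | move=> c hc].
  by apply: (rho_overlap_agree h11 h12 h21 h22) => //; apply/andP; split; lia.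
by right; apply: (rho_same_start h11 h12); apply: val_inj.
Qed.

End Construction.

(* Optimum (d,3)-CDAs exist whenever k <= 6 and d < v (no lower bound on
   v or d is needed). *)
Theorem optimum_CDA_3_le6 (v k d : nat) :
  k <= 6 -> d < v -> optimum_CDA_exists d 3 k v.
Proof.
case: v => [|n] // k_le6 d_lt_v; exists (shift_array k d_lt_v).
apply: CDA_of_cover_separating.
- exact: shift_array_cover.
- exact: shift_array_separating.
Qed.

Theorem mainTheorem16 (v k d : nat) :
  2 <= v -> (k = 5 \/ k = 6) -> 0 < d -> d + 1 <= v ->
  optimum_CDA_exists d 3 k v.
Proof.
move=> _ hk _ hdv; apply: optimum_CDA_3_le6; last by rewrite -addn1.
by case: hk => ->.
Qed.
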